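(* Assume $\mathrm{recc}(C)\subseteq\mathrm{recc}(P^B)$. Let $D\subseteq N_1\cup N_2$ and $S\subseteq M_D$. Then every $x\in P^B\setminus G_D^C$ satisfies $$\sum_{j\in S}\frac{x_j}{\alpha_j}-\sum_{j\in N\setminus D}\frac{x_j}{\varepsilon_j(S)}\le 1.$$
   Context: Let $A\in\mathbb{R}^{m\times n}$ have full row rank, $b\in\mathbb{R}^m$, and $P=\{x\in\mathbb{R}^n_+:Ax=b\}$. Let $C\subseteq\mathbb{R}^n$ be an open convex set. Fix a basis $B$ of $P$ with nonbasic set $N=\{1,\dots,n\}\setminus B$. Write $P=\{x:x_i=\bar b_i-\sum_{j\in N}\bar a_{ij}x_j\ (i\in B),\ x_j\ge0\ (j=1,\dots,n)\}$ with $\bar b\ge0$. The basic solution $\bar x$ has $\bar x_i=\bar b_i$ ($i\in B$) and $0$ ($i\in N$). $P^B$ is obtained by dropping $x_i\ge0$ for $i\in B$. For $j\in N$, $\bar r^j$ has $\bar r^j_k=-\bar a_{kj}$ ($k\in B$), $\bar r^j_j=1$, and $0$ otherwise. Thus $P^B=\{\bar x+\sum_{j\in N}x_j\bar r^j:x_j\ge0\}$, and for $x\in P^B$ the $x_j$ ($j\in N$) are the coefficients in this representation. It is assumed that $\bar x\notin\mathrm{cl}(C)$. For $j\in N$, $\alpha_j=\inf\{\lambda\ge0:\bar x+\lambda\bar r^j\in C\}$ and $\beta_j=\sup\{\lambda\ge0:\bar x+\lambda\bar r^j\in C\}$, with $\alpha_j=+\infty$, $\beta_j=-\infty$ if that halfline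 misses $C$. Define - $N_1=\{j:\alpha_j\in(0,\infty),\beta_j=+\infty\}$; - $N_2=\{j:\alpha_j\in(0,\infty),\beta_j\in(\alpha_j,\infty)\}$. For a set $K$, $\mathrm{recc}(K)=\{d:x+\lambda d\in K\ \forall x\in K,\lambda\ge0\}$. We use the convention $t/+\infty=0$. For $D\subseteq N_1\cup N_2$, define $G_D=\{\bar x\}+\mathrm{conv}\big(\bigcup_{j\in D}\{\lambda\bar r^j:\lambda>\alpha_j\}\big)$ and $G_D^C=G_D+\mathrm{recc}(C)$. For $(i,j)\in D\times(N\setminus D)$ let $\gamma_{ij}=\sup\{\gamma\ge0:\alpha_i\bar r^i+\gamma\bar r^j\in\mathrm{recc}(G_D^C)\}$. Let $M_D=\{i\in D:\gamma_{ij}>0\ \forall j\in N\setminus D\}$. For $S\subseteq M_D$ and $j\in N\setminus D$, let $\varepsilon_j(S)=\min_{i\in S}\gamma_{ij}$ if $S\neq\emptyset$, and $\varepsilon_j(\emptyset)=+\infty$. *)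

(* Points of R^n are row vectors 'rV[R]_n
   (which carry the product/matrix topology), coordinates x_j are  x 0 j. *)
From HB Require Import structures.
From mathcomp Require Import all_boot all_order all_algebra.
From mathcomp Require Import all_classical all_reals all_analysis.
From mathcomp Require Import matrix_topology.
Import Order.TTheory GRing.Theory Num.Theory.
Import numFieldTopology.Exports numFieldNormedType.Exports.

Set Implicit Arguments.
Unset Strict Implicit.
Unset Printing Implicit Defensive.

Local Open Scope classical_set_scope.
Local Open Scope ring_scope.

Section Defs.
Variables (R : realType) (m n : nat).
Implicit Types (K : set 'rV[R]_n).

Definition convex_set_rV K : Prop :=
  forall x y t, K x -> K y -> 0 <= t <= 1 -> K (t *: x + (1 - t) *: y).

Definition recc K : set 'rV[R]_n :=
  [set d | forall x lam, K x -> 0 <= lam -> K (x + lam *: d)].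

Definition conv_hull K : set 'rV[R]_n :=
  [set x | exists (k : nat) (w : 'I_k -> R) (p : 'I_k -> 'rV[R]_n),
      (forall i, 0 <= w i) /\ \sum_i w i = 1 /\ (forall i, K (p i)) /\
      x = \sum_i w i *: p i].

Definition msum K1 K2 : set 'rV[R]_n :=
  [set x | exists y z, K1 y /\ K2 z /\ x = y + z].

Variables (A : 'M[R]_(m, n)) (b : 'cV[R]_m) (beta : 'I_m -> 'I_n).

Definition basis_mx : 'M[R]_m := \matrix_(k, l) A k (beta l).
(** row l of the tableau corresponds to the basic variable beta l *)
Definition Abar : 'M[R]_(m, n) := invmx basis_mx *m A.
Definition bbar : 'cV[R]_m := invmx basis_mx *m b.

Definition Bset : {set 'I_n} := [set beta l | l : 'I_m].
Definition Nset : {set 'I_n} := ~: Bset.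

Definition xbar : 'rV[R]_n :=
  \row_i (if [pick l | beta l == i] is Some l then bbar l 0 else 0).

Definition rbar (j : 'I_n) : 'rV[R]_n :=
  \row_k (if [pick l | beta l == k] is Some l then - Abar l j
          else (k == j)%:R).

(** P^B : drop the nonnegativity of the basic variables in the tableau form *)
Definition PB : set 'rV[R]_n :=
  [set x | (forall j, j \in Nset -> 0 <= x 0 j) /\
           (forall l, x 0 (beta l) = bbar l 0 - \sum_(j in Nset) Abar l j * x 0 j)].

Variable (C : set 'rV[R]_n).

Definition alpha (j : 'I_n) : \bar R :=
  ereal_inf [set lam%:E | lam in [set lam : R | 0 <= lam /\ C (xbar + lam *: rbar j)]].
Definition beta_ (j : 'I_n) : \bar R :=
  ereal_sup [set lam%:E | lam in [set lam : R | 0 <= lam /\ C (xbar + lam *: rbar j)]].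

Definition inN1 (j : 'I_n) : Prop :=
  j \in Nset /\ (0 < alpha j < +oo)%E /\ beta_ j = +oo%E.
Definition inN2 (j : 'I_n) : Prop :=
  j \in Nset /\ (0 < alpha j < +oo)%E /\ (alpha j < beta_ j < +oo)%E.

Definition G (D : {set 'I_n}) : set 'rV[R]_n :=
  msum [set xbar]
    (conv_hull [set y | exists j lam, j \in D /\ (alpha j < lam%:E)%E /\
                                      y = lam *: rbar j]).

Definition GC (D : {set 'I_n}) : set 'rV[R]_n := msum (G D) (recc C).

Definition gamma (D : {set 'I_n}) (i j : 'I_n) : \bar R :=
  ereal_sup [set g%:E | g in [set g : R | 0 <= g /\
      recc (GC D) (fine (alpha i) *: rbar i + g *: rbar j)]].

Definition inM (D : {set 'I_n}) (i : 'I_n) : Prop :=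
  i \in D /\ forall j, j \in Nset :\: D -> (0 < gamma D i j)%E.

Definition eps (D S : {set 'I_n}) (j : 'I_n) : \bar R :=
  \big[Order.min/+oo%E]_(i in S) gamma D i j.

End Defs.

(** t / e for an extended real e, with the convention t / +oo = 0
    (the value -oo never occurs in the statement) *)
Definition ediv (R : realType) (t : R) (e : \bar R) : R :=
  match e with
  | EFin r => t / r
  | _ => 0
  end.

From HB Require Import structures.
From mathcomp Require Import all_boot all_order all_algebra.
From mathcomp Require Import all_classical all_reals all_analysis.
From mathcomp Require Import matrix_topology.
From mathcomp Require Import ring lra.
Import Order.TTheory GRing.Theory Num.Theory.
Import numFieldTopology.Exports numFieldNormedType.Exports.
Local Open Scope classical_set_scope.
Local Open Scope ring_scope.

Set Implicit Arguments.
Unset Strict Implicit.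
Unset Printing Implicit Defensive.

(* Suppose the inequality fails: sigma := sum_{i in S} x_i / alpha_i exceeds
   1 + sum_{j in N \ D} x_j / eps_j(S).  For i in S and j in N \ D, gamma_ij > 0
   yields recession directions alpha_i r^i + g_ij r^j of G_D^C with 1/g_ij at most
   slightly above 1/eps_j(S).  Averaging them with the weights x_i / (alpha_i sigma)
   absorbs every ray x_j r^j, j outside D, into one recession direction d, at the
   price of removing from each coefficient x_i, i in S, a fraction s_i / sigma with
   s_i < sigma - 1.  The remainder x - d = xbar + sum_{j in D} mu_j r^j then still
   has sum_j mu_j / alpha_j > 1, so it lies in G_D, and x = (x - d) + d lies in
   G_D^C. *)

Section Recession.
Variables (R : realType) (n : nat).
Implicit Types (K : set 'rV[R]_n) (d : 'rV[R]_n).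

Lemma recc0 K : recc K 0.
Proof. by move=> x lam Kx _; rewrite scaler0 addr0. Qed.

Lemma reccD K d1 d2 : recc K d1 -> recc K d2 -> recc K (d1 + d2).
Proof.
by move=> K1 K2 x lam Kx lam0; rewrite scalerDr addrA; apply: K2 => //; apply: K1.
Qed.

Lemma reccZ K c d : 0 <= c -> recc K d -> recc K (c *: d).
Proof.
by move=> c0 Kd x lam Kx lam0; rewrite scalerA; apply: Kd => //; rewrite mulr_ge0.
Qed.

Lemma recc_sum K (I : finType) (P : pred I) (F : I -> 'rV[R]_n) :
  (forall i, P i -> recc K (F i)) -> recc K (\sum_(i | P i) F i).
Proof. by move=> KF; apply: (big_ind (recc K)) => //; [exact: recc0|exact: reccD]. Qed.

Lemma conv_hull_rays (k : nat) (K : set 'rV[R]_n) (D : {set 'I_k})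
    (a mu : 'I_k -> R) (v : 'I_k -> 'rV[R]_n) :
  (forall j, j \in D -> 0 < a j) ->
  (forall j lam, j \in D -> a j < lam -> K (lam *: v j)) ->
  (forall j, j \in D -> 0 <= mu j) ->
  1 < \sum_(j in D) mu j / a j ->
  conv_hull K (\sum_(j in D) mu j *: v j).
Proof.
move=> a_gt0 Kv mu_ge0; set tau := \sum_(j in D) _ => tau_gt1.
have tau_gt0 : 0 < tau by apply: lt_trans tau_gt1.
have [D0|[j0 j0D]] := set_0Vmem D.
  by move: tau_gt1; rewrite /tau D0 big_set0 ltr10.
pose rep i := if i \in D then i else j0.
have repD i : rep i \in D by rewrite /rep; case: ifP.
(* the points [(a j * tau) *: v j] lie beyond [a j] since [tau > 1]; the weights
   [mu j / (a j * tau)] sum to 1 *)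
exists k, (fun i => if i \in D then mu i / (a i * tau) else 0),
  (fun i => (a (rep i) * tau) *: v (rep i)).
split; [|split; [|split]].
- by move=> i; case: ifP => // iD; rewrite divr_ge0 ?mu_ge0 // mulr_ge0 ?ltW ?a_gt0.
- rewrite -big_mkcond /=; under eq_bigr do rewrite invfM mulrA.
  by rewrite -mulr_suml divff // gt_eqF.
- by move=> i; apply: Kv => //; rewrite ltr_pMr ?a_gt0.
- rewrite [RHS](bigID (mem D)) /= [X in _ = _ + X]big1 ?addr0; last first.
    by move=> i /negbTE ->; rewrite scale0r.
  apply: eq_bigr => i iD; rewrite iD /rep iD scalerA mulfVK //.
  by rewrite mulf_neq0 // gt_eqF ?a_gt0.
Qed.

End Recession.

Lemma ereal_sup_approx_inv (R : realType) (X : set R) (eta : R) :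
  (0 < ereal_sup [set g%:E | g in X])%E -> 0 < eta ->
  exists g, [/\ X g, 0 < g & g^-1 <= ediv 1 (ereal_sup [set g%:E | g in X]) + eta].
Proof.
set s := ereal_sup _ => s_gt0 eta_gt0.
case sE: s s_gt0 => [r| |] //= r_gt0.
- rewrite lte_fin in r_gt0.
  have lt_r : ((r / (1 + eta * r))%:E < s)%E.
    rewrite sE lte_fin ltr_pdivrMr; last by rewrite ltr_wpDr // mulr_ge0 // ltW.
    by rewrite ltr_pMr // ltrDl mulr_gt0.
  have [_ [g Xg <-]] := ereal_sup_gt lt_r; rewrite lte_fin => lt_g.
  have q_gt0 : 0 < r / (1 + eta * r) by rewrite divr_gt0 // addr_gt0 // mulr_gt0.
  exists g; split => //; first exact: lt_trans lt_g.
  apply: (@le_trans _ _ (r / (1 + eta * r))^-1).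
    by rewrite lef_pV2 ?posrE ?ltW // (lt_trans q_gt0).
  by rewrite invf_div mulrDl div1r mulrK // unitfE gt_eqF.
- have lt_eta : ((eta^-1)%:E < s)%E by rewrite sE ltry.
  have [_ [g Xg <-]] := ereal_sup_gt lt_eta; rewrite lte_fin => lt_g.
  have g_gt0 : 0 < g by apply: lt_trans lt_g; rewrite invr_gt0.
  by exists g; split => //; rewrite add0r -[eta]invrK lef_pV2 ?posrE ?invr_gt0 // ltW.
Qed.

Lemma le_ediv1 (R : realType) (e1 e2 : \bar R) :
  (0 < e1)%E -> (e1 <= e2)%E -> ediv 1 e2 <= ediv 1 e1.
Proof.
case: e1 => [r1| |] //; case: e2 => [r2| |] //=; rewrite ?lte_fin ?lee_fin.
- by move=> r1_gt0 le_r; rewrite !div1r lef_pV2 ?posrE // (lt_le_trans r1_gt0).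
- by move=> r1_gt0 _; rewrite div1r invr_ge0 ltW.
Qed.

Lemma edivE (R : realType) (t : R) (e : \bar R) : ediv t e = t * ediv 1 e.
Proof. by case: e => [r| |] //=; rewrite ?mulr0 // mulrA mulr1. Qed.

Lemma exists_slack (R : realFieldType) (E X B : R) :
  0 <= X -> E < B -> exists2 eta, 0 < eta & E + eta * X <= B.
Proof.
move=> X_ge0 lt_EB; exists ((B - E) / (X + 1)); first by rewrite divr_gt0; lra.
have : X / (X + 1) <= 1 by rewrite ler_pdivrMr; lra.
rewrite mulrAC -mulrA; move: (X / _) => q; nra.
Qed.

Lemma ediv_ge0 (R : realType) (t : R) (e : \bar R) :
  0 <= t -> (0 < e)%E -> 0 <= ediv t e.
Proof. by case: e => [r| |] //= t_ge0; rewrite lte_fin => /ltW r_ge0; rewrite divr_ge0. Qed.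

Section Weights.
Variables (R : realFieldType) (I : finType) (D S : {set I}) (a x s : I -> R) (B : R).
Local Notation sigma := (\sum_(i in S) x i / a i).
Hypotheses (SD : S \subset D) (a_gt0 : forall j, j \in D -> 0 < a j)
  (x_ge0 : forall j, j \in D -> 0 <= x j) (s_le : forall i, i \in S -> s i <= B)
  (B_ge0 : 0 <= B) (B_lt : B < sigma - 1).

Definition weight i := x i / (a i * sigma).
Definition residual j := x j - (if j \in S then weight j * (a j * s j) else 0).

Let sigma_gt0 : 0 < sigma.
Proof. by rewrite (le_lt_trans B_ge0) // (lt_le_trans B_lt) // gerBl. Qed.

Let SD_S j : (j \in D) && (j \in S) = (j \in S).
Proof. by case: (boolP (j \in S)) => [/(fintype.subsetP SD)->|]; rewrite ?andbF. Qed.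

Lemma sum_restrict (V : nmodType) (F : I -> V) :
  \sum_(j in D) (if j \in S then F j else 0) = \sum_(j in S) F j.
Proof. by rewrite -big_mkcondr; apply: eq_bigl => j; rewrite SD_S. Qed.

Lemma weight_ge0 i : i \in S -> 0 <= weight i.
Proof.
move=> /(fintype.subsetP SD) iD.
by rewrite divr_ge0 ?x_ge0 // mulr_ge0 ?ltW ?a_gt0.
Qed.

Lemma sum_weight : \sum_(i in S) weight i = 1.
Proof.
under eq_bigr do rewrite /weight invfM mulrA.
by rewrite -mulr_suml divff // gt_eqF.
Qed.

Lemma residual_ge0 j : j \in D -> 0 <= residual j.
Proof.
move=> jD; rewrite /residual; case: ifPn => jS; last by rewrite subr0 x_ge0.
have -> : weight j * (a j * s j) = x j * (s j / sigma).
  by rewrite /weight; field; rewrite !gt_eqF ?a_gt0.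
have : s j / sigma <= 1.
  rewrite ler_pdivrMr ?mul1r // (le_trans (s_le jS)) // ltW //.
  by rewrite (lt_le_trans B_lt) // gerBl.
by rewrite -subr_ge0 -{1}[x j]mulr1 -mulrBr => ?; rewrite mulr_ge0 ?x_ge0.
Qed.

Lemma residual_gt1 : 1 < \sum_(j in D) residual j / a j.
Proof.
have -> : \sum_(j in D) residual j / a j =
    \sum_(j in D) x j / a j - \sum_(j in S) weight j * s j.
  rewrite -sum_restrict -sumrB; apply: eq_bigr => j jD.
  rewrite /residual; case: ifP => _; last by rewrite !subr0.
  by field; rewrite gt_eqF ?a_gt0.
have sigma_le : sigma <= \sum_(j in D) x j / a j.
  rewrite [X in _ <= X](bigID (mem S)) /= (eq_bigl _ _ SD_S) lerDl.
  by apply: sumr_ge0 => j /andP[jD _]; rewrite divr_ge0 ?x_ge0 ?ltW ?a_gt0.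
have weighted_le : \sum_(j in S) weight j * s j <= B.
  rewrite -[B]mul1r -sum_weight mulr_suml; apply: ler_sum => j jS.
  by rewrite ler_wpM2l ?weight_ge0 ?s_le.
move: sigma_le weighted_le B_lt.
move: (\sum_(j in D) _) (\sum_(j in S) _) (\sum_(i in S) _) => u v t; lra.
Qed.

Lemma residual_decomp (V : lmodType R) (v : I -> V) (w : V) :
  \sum_(j in D) x j *: v j + w =
  \sum_(j in D) residual j *: v j + \sum_(i in S) weight i *: ((a i * s i) *: v i + w).
Proof.
have split_rays : \sum_(i in S) weight i *: ((a i * s i) *: v i + w) =
    \sum_(i in S) (weight i * (a i * s i)) *: v i + w.
  under eq_bigr do rewrite scalerDr scalerA.
  by rewrite big_split /= -scaler_suml sum_weight scale1r.
have residual_rays : \sum_(j in D) residual j *: v j =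
    \sum_(j in D) x j *: v j - \sum_(i in S) (weight i * (a i * s i)) *: v i.
  rewrite -sum_restrict -sumrB; apply: eq_bigr => j _.
  by rewrite /residual scalerBl; case: ifP; rewrite ?scale0r.
by rewrite split_rays residual_rays addrA subrK.
Qed.

End Weights.

Section Tableau.
Variables (R : realType) (m n : nat) (A : 'M[R]_(m, n)) (b : 'cV[R]_m)
  (beta : 'I_m -> 'I_n) (C : set 'rV[R]_n).
Hypothesis beta_inj : injective beta.

Local Notation xbar := (xbar A b beta).
Local Notation r := (rbar A beta).
Local Notation N := (Nset beta).

Lemma PB_decomp x : PB A b beta x -> x = xbar + \sum_(j in N) x 0 j *: r j.
Proof.
move=> [xN xB]; apply/rowP => k; rewrite !mxE summxE.
case: pickP => [l /eqP bl | nb].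
- under eq_bigr do rewrite !mxE.
  case: pickP => [l' /eqP bl'|/(_ l)]; last by rewrite bl eqxx.
  have -> : l' = l by apply: beta_inj; rewrite bl bl'.
  rewrite -bl xB; congr (_ + _); rewrite -sumrN; apply: eq_bigr => j _.
  by rewrite mulrN mulrC.
- have kN : k \in N.
    by rewrite finset.in_setC; apply/imsetP => -[l _ kl]; move: (nb l); rewrite -kl eqxx.
  rewrite (bigD1 k) //= big1 ?addr0.
    by rewrite !mxE; case: pickP => [l|_]; [rewrite nb|rewrite eqxx mulr1 add0r].
  move=> j /andP[_ jk]; rewrite !mxE; case: pickP => [l|_]; first by rewrite nb.
  by rewrite eq_sym (negbTE jk) mulr0.
Qed.

Variables (D S : {set 'I_n}).
Hypotheses (D_N12 : forall j, j \in D -> inN1 A b beta C j \/ inN2 A b beta C j)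
  (S_M : forall i, i \in S -> inM A b beta C D i).

Local Notation alpha := (alpha A b beta C).
Local Notation a j := (fine (alpha j)).
Local Notation T := (N :\: D).
Local Notation GC := (GC A b beta C D).
Local Notation eps := (eps A b beta C D S).

Lemma alpha_D j : j \in D -> [/\ j \in N, 0 < a j & alpha j = (a j)%:E].
Proof.
by move=> /D_N12 [] [jN [/andP[+ +] _]]; case: (alpha j) => //= a_j; rewrite lte_fin.
Qed.

Lemma S_subset_D : S \subset D.
Proof. by apply/fintype.subsetP => i /S_M []. Qed.

Lemma eps_gt0 j : j \in T -> (0 < eps j)%E.
Proof.
move=> jT; apply: (big_ind (fun e => 0 < e)%E) => //.
  by move=> e1 e2 e1_gt0 e2_gt0; rewrite lt_min e1_gt0 e2_gt0.
by move=> i /S_M [_ /(_ j jT)].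
Qed.

Lemma eps_le_gamma i j : i \in S -> (eps j <= gamma A b beta C D i j)%E.
Proof. by move=> iS; rewrite /eps (bigD1 i) //= ge_min lexx. Qed.

Lemma gamma_approx i j eta : i \in S -> j \in T -> 0 < eta ->
  exists g, [/\ 0 < g, recc GC (a i *: r i + g *: r j) &
                g^-1 <= ediv 1 (eps j) + eta].
Proof.
move=> iS jT eta_gt0; have [_ gamma_gt0] := S_M iS.
have [g [[_ recc_g] g_gt0 g_le]] := ereal_sup_approx_inv (gamma_gt0 j jT) eta_gt0.
exists g; split => //; apply: le_trans g_le _.
by rewrite lerD2r le_ediv1 ?eps_gt0 ?eps_le_gamma.
Qed.

Lemma recc_GC_ray i (c : 'I_n -> R) B : i \in S ->
  (forall j, j \in T -> 0 <= c j) -> \sum_(j in T) ediv (c j) (eps j) < B ->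
  exists2 s, s <= B & recc GC ((a i * s) *: r i + \sum_(j in T) c j *: r j).
Proof.
move=> iS c_ge0; set E := \sum_(j in T) _ => lt_EB.
have X_ge0 : 0 <= \sum_(j in T) c j by exact: sumr_ge0.
have [eta eta_gt0 slack] := exists_slack X_ge0 lt_EB.
have /choice [g g_spec] : forall j, exists g : R, j \in T ->
    [/\ 0 < g, recc GC (a i *: r i + g *: r j) & g^-1 <= ediv 1 (eps j) + eta].
  move=> j; case: (boolP (j \in T)) => [jT|_]; last by exists 0.
  by have [g ?] := gamma_approx iS jT eta_gt0; exists g.
exists (\sum_(j in T) c j / g j).
  apply: le_trans slack; rewrite mulr_sumr -big_split; apply: ler_sum => j jT.
  have [_ _ g_le] := g_spec j jT.
  by rewrite /= edivE [eta * _]mulrC -mulrDr ler_wpM2l ?c_ge0.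
(* each ray [c j *: r j] is paid for by [c j / g j] copies of [a i *: r i + g j *: r j] *)
have -> : (a i * \sum_(j in T) c j / g j) *: r i + \sum_(j in T) c j *: r j =
    \sum_(j in T) (c j / g j) *: (a i *: r i + g j *: r j).
  have g_neq0 j : j \in T -> g j != 0 by case/g_spec => /gt_eqF ->.
  under [RHS]eq_bigr => j jT do rewrite scalerDr !scalerA (divfK (g_neq0 j jT)).
  rewrite big_split /= -scaler_suml mulr_sumr.
  by congr (_ *: _ + _); apply: eq_bigr => j _; rewrite mulrC.
apply: recc_sum => j jT; have [g_gt0 recc_g _] := g_spec j jT.
by apply: reccZ recc_g; rewrite divr_ge0 ?c_ge0 ?ltW.
Qed.

Lemma G_xbar_rbar mu : (forall j, j \in D -> 0 <= mu j) ->
  1 < \sum_(j in D) mu j / a j ->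
  G A b beta C D (xbar + \sum_(j in D) mu j *: r j).
Proof.
move=> mu_ge0 gt1; exists xbar, (\sum_(j in D) mu j *: r j); split=> //; split=> //.
apply: conv_hull_rays mu_ge0 gt1 => [j /alpha_D[]//|j lam jD lt_lam].
by exists j, lam; have [_ _ ->] := alpha_D jD.
Qed.

Lemma GC_add_recc y d : G A b beta C D y -> recc GC d -> GC (y + d).
Proof.
move=> Gy recc_d; rewrite -[d]scale1r; apply: recc_d => //.
by exists y, 0; split=> //; split; [exact: recc0|rewrite addr0].
Qed.

Lemma GC_of_gap x : PB A b beta x ->
  \sum_(j in T) ediv (x 0 j) (eps j) < \sum_(j in S) x 0 j / a j - 1 -> GC x.
Proof.
move=> xPB gap; have [xN _] := xPB.
have xD j : j \in D -> 0 <= x 0 j by case/alpha_D => /xN.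
have xT j : j \in T -> 0 <= x 0 j by rewrite inE => /andP[_ /xN].
have E_ge0 : 0 <= \sum_(j in T) ediv (x 0 j) (eps j).
  by apply: sumr_ge0 => j jT; rewrite ediv_ge0 ?xT ?eps_gt0.
have [lt_EB lt_B] := midf_lt gap; set B := _ / 2 in lt_EB lt_B.
have B_ge0 : 0 <= B by rewrite (le_trans E_ge0) ?ltW.
have /choice [s s_spec] : forall i, exists s : R, i \in S ->
    s <= B /\ recc GC ((a i * s) *: r i + \sum_(j in T) x 0 j *: r j).
  move=> i; case: (boolP (i \in S)) => [iS|_]; last by exists 0.
  by have [s ? ?] := recc_GC_ray iS xT lt_EB; exists s.
have s_le i : i \in S -> s i <= B by case/s_spec.
have a_gt0 j : j \in D -> 0 < a j by case/alpha_D.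
have SD := S_subset_D.
have x_split : x = xbar + (\sum_(j in D) x 0 j *: r j + \sum_(j in T) x 0 j *: r j).
  rewrite {1}(PB_decomp xPB) (bigID (mem D)) /=; congr (_ + (_ + _)).
    by apply: eq_bigl => j; case: (boolP (j \in D)) => [/alpha_D[->]|]; rewrite ?andbF.
  by apply: eq_bigl => j; rewrite !inE andbC.
rewrite x_split (residual_decomp s SD B_ge0 lt_B) addrA.
apply: GC_add_recc.
  exact: G_xbar_rbar (residual_ge0 a_gt0 xD s_le B_ge0 lt_B)
                     (residual_gt1 SD a_gt0 xD s_le B_ge0 lt_B).
apply: recc_sum => i iS; apply: reccZ (weight_ge0 SD a_gt0 xD B_ge0 lt_B iS) _.
by case: (s_spec i iS).
Qed.

End Tableau.

Theorem theorem3 (R : realType) (m n : nat) (A : 'M[R]_(m, n)) (b : 'cV[R]_m)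
    (beta : 'I_m -> 'I_n) (C : set 'rV[R]_n) (D S : {set 'I_n}) :
  \rank A = m ->
  injective beta ->
  basis_mx A beta \in unitmx ->
  (forall l, 0 <= bbar A b beta l 0) ->
  open C -> convex_set_rV C ->
  ~ closure C (xbar A b beta) ->
  recc C `<=` recc (PB A b beta) ->
  (forall j, j \in D -> inN1 A b beta C j \/ inN2 A b beta C j) ->
  (forall i, i \in S -> inM A b beta C D i) ->
  forall x : 'rV[R]_n, PB A b beta x -> ~ GC A b beta C D x ->
    \sum_(j in S) ediv (x 0 j) (alpha A b beta C j)
    - \sum_(j in Nset beta :\: D) ediv (x 0 j) (eps A b beta C D S j) <= 1.
Proof.
move=> _ beta_inj _ _ _ _ _ _ D_N12 S_M x xPB xGC.
rewrite leNgt; apply/negP => gap; apply: xGC; apply: (GC_of_gap beta_inj D_N12 S_M xPB).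
have -> : \sum_(j in S) x 0 j / fine (alpha A b beta C j) =
    \sum_(j in S) ediv (x 0 j) (alpha A b beta C j).
  apply: eq_bigr => j /(fintype.subsetP (S_subset_D S_M)) jD.
  by have [_ _ ->] := alpha_D D_N12 jD.
by rewrite ltrBrDl addrC -ltrBrDl.
Qed.
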